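(* Consider four agents in the plane with positions $p_1,p_2,p_3,p_4\in\mathbb{R}^2$, interaction graph with edge set $E=\{(1,2),(1,3),(2,3),(3,4)\}$, feasible desired distances, a potential satisfying the stated assumptions, and the dynamics $\dot p_i=-\sum_{j\in\mathcal{N}_i} g_{ij}(p_i-p_j)$. Let $p^*$ be an undesired equilibrium (i.e. $p^*\in\mathcal{Q}_I$) at which $p^*_1,p^*_2,p^*_3$ are collinear. Then, for a suitable labeling $\{i,j,k\}=\{1,2,3\}$, exactly one of the following configurations occurs, with the stated properties (all quantities evaluated at $p^*$): (a) the three agents are distinct and $p^*_j$ lies strictly between $p^*_i$ and $p^*_k$ on the line; then $g_{ij}<0$, $g_{jk}<0$, $g_{ik}>0$, $g_{ij}+g_{ik}<0$ and $g_{jk}+g_{ik}<0$; (b) $p^*_j=p^*_k\neq p^*_i$ (a pair of agents coincide and the remaining agent is at another position); then $g_{jk}<0$ and $g_{ij}=g_{ik}=0$; (c) $p^*_i=p^*_j=p^*_k$; then $g_{ij}<0$, $g_{jk}<0$, $g_{ik}<0$.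
   Context: Agents have single-integrator dynamics $\dot p_i=u_i$. For each edge $(i,j)$ a desired distance $\bar d_{ij}>0$ is given; the set of desired distances is feasible, meaning that whenever $(i,j),(j,k),(k,i)$ are edges, $\bar d_{ij}+\bar d_{jk}>\bar d_{ki}$, $\bar d_{jk}+\bar d_{ki}>\bar d_{ij}$, $\bar d_{ki}+\bar d_{ij}>\bar d_{jk}$ (here this applies to the triangle $1,2,3$). A potential $\phi(x,\bar d)$ is given such that for each fixed $\bar d>0$: $\phi(\cdot,\bar d)\ge 0$; $g(x,\bar d):=\partial\phi(x,\bar d)/\partial x$ is strictly monotonically increasing in $x$; $\phi$ and $g$ are continuously differentiable on $x\in(-\bar d^2,\infty)$ and each equals zero if and only if $x=0$; $\phi(\cdot,\bar d)$ is analytic in a neighbourhood of $0$. Write $z_{ij}=p_i-p_j$, $e_{ij}=\|z_{ij}\|^2-\bar d_{ij}^2$, $g_{ij}=g(e_{ij},\bar d_{ij})$ (symmetric in $i,j$), and $\mathcal{N}_i$ for the neighbours of $i$. The dynamics $\dot p_i=-\sum_{j\in\mathcal{N}_i}g_{ij}z_{ij}$ is the negative gradient of $V=\tfrac12\sum_{(i,j)\in E}\phi(e_{ij},\bar d_{ij})$. The equilibrium set is $\mathcal{Q}=\{p:\sum_{j\in\mathcal{N}_i}g_{ij}z_{ij}=0\ \forall i\}$; the desired set is $\mathcal{Q}_C=\{p\in\mathcal{Q}:\|z_{ij}\|=\bar d_{ij}\ \forall (i,j)\in E\}$; the undesired equilibrium set is $\mathcal{Q}_I=\mathcal{Q}\setminus\mathcal{Q}_C$.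 *)

From Stdlib Require Import Reals Lra List.
From Coquelicot Require Import Coquelicot.
Import ListNotations.
Open Scope R_scope.

Definition pt := (R * R)%type.
Definition vadd (u v : pt) : pt := (fst u + fst v, snd u + snd v).
Definition vscale (a : R) (u : pt) : pt := (a * fst u, a * snd u).
Definition vzero : pt := (0, 0).
Definition sqnorm (u : pt) : R := fst u ^ 2 + snd u ^ 2.
Definition vnorm (u : pt) : R := sqrt (sqnorm u).

Definition agents : list nat := [1; 2; 3; 4]%nat.
Definition E : list (nat * nat) := [(1,2); (1,3); (2,3); (3,4)]%nat.
Definition nbrs (i : nat) : list nat :=
  map snd (filter (fun e => Nat.eqb (fst e) i) E)
  ++ map fst (filter (fun e => Nat.eqb (snd e) i) E).

Definition potential_assumptions (phi g : R -> R -> R) : Prop :=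
  forall d : R, 0 < d ->
    (forall x, - d ^ 2 <= x -> 0 <= phi x d) /\
    (forall x y, - d ^ 2 <= x -> x < y -> g x d < g y d) /\
    (forall x, - d ^ 2 < x ->
        is_derive (fun y => phi y d) x (g x d) /\
        continuous (fun y => g y d) x /\
        ex_derive (fun y => g y d) x /\
        continuous (Derive (fun y => g y d)) x) /\
    (forall x, - d ^ 2 < x -> (phi x d = 0 <-> x = 0) /\ (g x d = 0 <-> x = 0)) /\
    (exists (r : R) (a : nat -> R), 0 < r /\
        forall x, Rabs x < r -> is_pseries a x (phi x d)).

Definition feasible (D : nat -> nat -> R) : Prop :=
  D 1%nat 2%nat + D 2%nat 3%nat > D 3%nat 1%nat /\
  D 2%nat 3%nat + D 3%nat 1%nat > D 1%nat 2%nat /\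
  D 3%nat 1%nat + D 1%nat 2%nat > D 2%nat 3%nat.

Section Quantities.
Variables (g : R -> R -> R) (D : nat -> nat -> R) (p : nat -> pt).

Definition z (i j : nat) : pt := (fst (p i) - fst (p j), snd (p i) - snd (p j)).
Definition e (i j : nat) : R := sqnorm (z i j) - D i j ^ 2.
Definition gg (i j : nat) : R := g (e i j) (D i j).

Definition in_Q : Prop :=
  forall i, In i agents ->
    fold_right vadd vzero (map (fun j => vscale (gg i j) (z i j)) (nbrs i)) = vzero.

Definition in_QC : Prop :=
  in_Q /\ forall ij, In ij E -> vnorm (z (fst ij) (snd ij)) = D (fst ij) (snd ij).

Definition in_QI : Prop := in_Q /\ ~ in_QC.

End Quantities.

Definition collinear (a b c : pt) : Prop :=
  (fst b - fst a) * (snd c - snd a) - (snd b - snd a) * (fst c - fst a) = 0.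

Definition strictly_between (a q b : pt) : Prop :=
  exists t : R, 0 < t < 1 /\ q = vadd (vscale (1 - t) a) (vscale t b).

From Stdlib Require Import Reals List Lra Psatz Classical.
From Coquelicot Require Import Coquelicot.
Import ListNotations.
Open Scope R_scope.

(* Each weight g_ij has the sign of |p_i - p_j| - d_ij, because g is increasing
   and vanishes at 0.  Only triangle edges act on agents 1 and 2, so at an
   equilibrium the triangle forces balance at every vertex of the triangle.
   Coinciding agents have g < 0.  If p_j = p_k <> p_i, balancing at j forces
   g_ij = 0 and then balancing at i forces g_ik = 0.  If p_j lies strictly
   between p_i and p_k, balancing at i and at k makes g_ij and g_jk negative
   multiples of g_ik, and g_ik <= 0 is ruled out by the strict triangle
   inequality d_ik < d_ij + d_jk, since |p_i - p_k| = |p_i - p_j| + |p_j - p_k|. *)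

Definition same_sign (u v : R) : Prop :=
  (u < 0 <-> v < 0) /\ (u = 0 <-> v = 0) /\ (0 < u <-> 0 < v).

Lemma same_sign_trans u v w : same_sign u v -> same_sign v w -> same_sign u w.
Proof. unfold same_sign; tauto. Qed.

Lemma same_sign_sqr_sub r d : 0 <= r -> 0 < d -> same_sign (r ^ 2 - d ^ 2) (r - d).
Proof. intros Hr Hd; unfold same_sign; repeat split; intros; nra. Qed.

Lemma potential_same_sign phi g d x : potential_assumptions phi g ->
  0 < d -> - d ^ 2 <= x -> same_sign (g x d) x.
Proof.
  intros Hpot Hd Hx.
  destruct (Hpot d Hd) as (_ & Hmono & _ & Hzero & _).
  assert (Hg0 : g 0 d = 0) by (apply (proj2 (Hzero 0 ltac:(nra))); reflexivity).
  unfold same_sign.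
  destruct (Rtotal_order x 0) as [Hlt | [-> | Hgt]].
  - pose proof (Hmono x 0 Hx Hlt); repeat split; intros; lra.
  - rewrite Hg0; repeat split; intros; lra.
  - pose proof (Hmono 0 x ltac:(nra) Hgt); repeat split; intros; lra.
Qed.

Definition vsub (u v : pt) : pt := (fst u - fst v, snd u - snd v).
Definition pt_dist (u v : pt) : R := vnorm (vsub u v).

Lemma vsub_eq_vzero u v : vsub u v = vzero -> u = v.
Proof.
  destruct u as [u1 u2], v as [v1 v2]; unfold vsub, vzero; cbn [fst snd].
  intros H; injection H as H1 H2; f_equal; lra.
Qed.

Lemma vscale_eq_vzero k u : vscale k u = vzero -> u <> vzero -> k = 0.
Proof.
  destruct u as [u1 u2]; unfold vscale, vzero; cbn [fst snd]; intros H Hu.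
  injection H as H1 H2.
  destruct (Rmult_integral _ _ H1) as [| ->]; [assumption|].
  destruct (Rmult_integral _ _ H2) as [| ->]; [assumption|].
  contradiction.
Qed.

Lemma vnorm_vscale k u : 0 <= k -> vnorm (vscale k u) = k * vnorm u.
Proof.
  intros Hk; unfold vnorm, sqnorm, vscale; cbn [fst snd].
  replace ((k * fst u) ^ 2 + (k * snd u) ^ 2) with (k ^ 2 * (fst u ^ 2 + snd u ^ 2)) by ring.
  rewrite sqrt_mult_alt, sqrt_pow2; [reflexivity | assumption | nra].
Qed.

Lemma pt_dist_sym u v : pt_dist u v = pt_dist v u.
Proof. unfold pt_dist, vnorm, sqnorm, vsub; cbn [fst snd]; f_equal; ring. Qed.

Lemma pt_dist_diag u : pt_dist u u = 0.
Proof.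
  unfold pt_dist, vnorm, sqnorm, vsub; cbn [fst snd].
  replace ((fst u - fst u) ^ 2 + (snd u - snd u) ^ 2) with 0 by ring.
  apply sqrt_0.
Qed.

Lemma sqnorm_vsub u v : sqnorm (vsub u v) = pt_dist u v ^ 2.
Proof.
  unfold pt_dist, vnorm; rewrite pow2_sqrt; [reflexivity|].
  unfold sqnorm; nra.
Qed.

Lemma same_sign_coincident G u d : 0 < d -> same_sign G (pt_dist u u - d) -> G < 0.
Proof. rewrite pt_dist_diag; intros Hd [HS _]; apply HS; lra. Qed.

Lemma strictly_between_vsub a b c : strictly_between a b c ->
  exists t, 0 < t < 1 /\
    vsub a b = vscale t (vsub a c) /\ vsub c b = vscale (1 - t) (vsub c a).
Proof.
  intros (t & Ht & ->); exists t; split; [assumption|].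
  unfold vsub, vadd, vscale; cbn [fst snd]; split; f_equal; ring.
Qed.

Lemma collinear_vsub a b c : collinear a b c -> a <> b ->
  exists s, vsub c a = vscale s (vsub b a).
Proof.
  destruct a as [a1 a2], b as [b1 b2], c as [c1 c2].
  unfold collinear, vsub, vscale; cbn [fst snd]; intros Hcol Hab.
  destruct (Req_dec a1 b1) as [<- | H1].
  - assert (H2 : a2 <> b2) by (intros <-; apply Hab; reflexivity).
    exists ((c2 - a2) / (b2 - a2)); f_equal; [nra | field; lra].
  - exists ((c1 - a1) / (b1 - a1)); f_equal; [field; lra|].
    apply (Rmult_eq_reg_l (b1 - a1)); [|lra].
    field_simplify; [nra | lra].
Qed.

Lemma strictly_between_of_vsub a q b t :
  0 < t < 1 -> vsub q a = vscale t (vsub b a) -> strictly_between a q b.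
Proof.
  intros Ht H; exists t; split; [assumption|].
  destruct a as [a1 a2], q as [q1 q2], b as [b1 b2].
  unfold vsub, vscale, vadd in *; cbn [fst snd] in *.
  injection H as H1 H2; f_equal; nra.
Qed.

Lemma collinear_strictly_between a b c :
  a <> b -> b <> c -> a <> c -> collinear a b c ->
  strictly_between a c b \/ strictly_between a b c \/ strictly_between b a c.
Proof.
  intros Hab Hbc Hac Hcol.
  destruct (collinear_vsub a b c Hcol Hab) as [s Hs].
  destruct a as [a1 a2], b as [b1 b2], c as [c1 c2].
  unfold vsub, vscale in Hs; cbn [fst snd] in Hs; injection Hs as H1 H2.
  assert (Hs0 : s <> 0) by (intros ->; apply Hac; f_equal; lra).
  assert (Hs1 : s <> 1) by (intros ->; apply Hbc; f_equal; lra).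
  destruct (Rlt_or_le s 0) as [Hneg | Hnneg]; [| destruct (Rlt_or_le s 1) as [Hlt1 | Hge1]].
  - right; right; apply (strictly_between_of_vsub _ _ _ (1 / (1 - s))).
    + split; [apply Rdiv_lt_0_compat | apply Rlt_div_l]; lra.
    + unfold vsub, vscale; cbn [fst snd].
      replace c1 with (a1 + s * (b1 - a1)) by lra; replace c2 with (a2 + s * (b2 - a2)) by lra.
      f_equal; field; lra.
  - left; apply (strictly_between_of_vsub _ _ _ s); [lra|].
    unfold vsub, vscale; cbn [fst snd]; f_equal; lra.
  - right; left; apply (strictly_between_of_vsub _ _ _ (1 / s)).
    + split; [apply Rdiv_lt_0_compat | apply Rlt_div_l]; lra.
    + unfold vsub, vscale; cbn [fst snd].
      replace c1 with (a1 + s * (b1 - a1)) by lra; replace c2 with (a2 + s * (b2 - a2)) by lra.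
      f_equal; field; lra.
Qed.

Definition balanced_at (a b c : pt) (gab gac : R) : Prop :=
  vadd (vscale gab (vsub a b)) (vscale gac (vsub a c)) = vzero.

Lemma balanced_at_swap a b c gab gac :
  balanced_at a b c gab gac -> balanced_at a c b gac gab.
Proof. unfold balanced_at, vadd; intros H; rewrite <- H; f_equal; ring. Qed.

(* Internal forces cancel, so the balance of two vertices implies that of the third. *)
Lemma balanced_at_third a b c gab gbc gac :
  balanced_at a b c gab gac -> balanced_at b a c gab gbc -> balanced_at c a b gac gbc.
Proof.
  destruct a as [a1 a2], b as [b1 b2], c as [c1 c2].
  unfold balanced_at, vadd, vscale, vsub, vzero; cbn [fst snd].
  intros Ha Hb; injection Ha as Ha1 Ha2; injection Hb as Hb1 Hb2.
  f_equal; lra.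
Qed.

Lemma balanced_at_aligned a b c gab gac s :
  vsub a b = vscale s (vsub a c) -> a <> c -> balanced_at a b c gab gac ->
  s * gab + gac = 0.
Proof.
  unfold balanced_at; intros Hab Hac Hbal.
  apply (vscale_eq_vzero _ (vsub a c)).
  - rewrite <- Hbal, Hab; unfold vadd, vscale; cbn [fst snd]; f_equal; ring.
  - intros H; apply Hac, vsub_eq_vzero, H.
Qed.

Lemma balanced_pair_coincide a b c gab gbc gac :
  b = c -> a <> b -> balanced_at a b c gab gac -> balanced_at b c a gbc gab ->
  gab = 0 /\ gac = 0.
Proof.
  intros <- Hab Ha Hb.
  assert (Hsum : 1 * gab + gac = 0).
  { apply (balanced_at_aligned a b b gab gac 1); auto.
    unfold vscale; destruct (vsub a b); cbn [fst snd]; f_equal; ring. }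
  assert (Hzero : 0 * gbc + gab = 0).
  { apply (balanced_at_aligned b b a gbc gab 0); auto.
    unfold vsub, vscale; cbn [fst snd]; f_equal; ring. }
  lra.
Qed.

Lemma between_weights_sign t r gab gbc gac dab dbc dac :
  0 < t < 1 -> dac < dab + dbc ->
  same_sign gab (t * r - dab) -> same_sign gbc ((1 - t) * r - dbc) ->
  same_sign gac (r - dac) ->
  t * gab + gac = 0 -> (1 - t) * gbc + gac = 0 ->
  gab < 0 /\ gbc < 0 /\ gac > 0 /\ gab + gac < 0 /\ gbc + gac < 0.
Proof.
  intros Ht Htri (Sab1 & Sab2 & Sab3) (Sbc1 & Sbc2 & Sbc3) (Sac1 & Sac2 & Sac3) Ka Kc.
  destruct (Rtotal_order gac 0) as [Hneg | [Hzero | Hpos]].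
  - assert (Hab : 0 < gab) by nra; assert (Hbc : 0 < gbc) by nra.
    apply Sac1 in Hneg; apply Sab3 in Hab; apply Sbc3 in Hbc; lra.
  - assert (Hab : gab = 0) by nra; assert (Hbc : gbc = 0) by nra.
    apply Sac2 in Hzero; apply Sab2 in Hab; apply Sbc2 in Hbc; lra.
  - assert (Hab : gab < 0) by nra; assert (Hbc : gbc < 0) by nra.
    repeat split; nra.
Qed.

Lemma balanced_between_sign a b c gab gbc gac dab dbc dac :
  dac < dab + dbc ->
  same_sign gab (pt_dist a b - dab) -> same_sign gbc (pt_dist b c - dbc) ->
  same_sign gac (pt_dist a c - dac) ->
  balanced_at a b c gab gac -> balanced_at c b a gbc gac ->
  a <> c -> strictly_between a b c ->
  gab < 0 /\ gbc < 0 /\ gac > 0 /\ gab + gac < 0 /\ gbc + gac < 0.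
Proof.
  intros Htri Sab Sbc Sac Ba Bc Hac Hb.
  destruct (strictly_between_vsub _ _ _ Hb) as (t & Ht & Hab & Hcb).
  assert (Dab : pt_dist a b = t * pt_dist a c).
  { unfold pt_dist; rewrite Hab; apply vnorm_vscale; lra. }
  assert (Dbc : pt_dist b c = (1 - t) * pt_dist a c).
  { rewrite pt_dist_sym, (pt_dist_sym a c); unfold pt_dist; rewrite Hcb.
    apply vnorm_vscale; lra. }
  rewrite Dab in Sab; rewrite Dbc in Sbc.
  apply (between_weights_sign t (pt_dist a c) _ _ _ dab dbc dac); auto.
  - apply (balanced_at_aligned a b c); auto.
  - apply (balanced_at_aligned c b a); auto.
Qed.

Ltac case_perms123 H :=
  destruct H as [H|[H|[H|[H|[H|[H|[]]]]]]]; injection H as <- <- <-.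

Definition perms123 : list (nat * nat * nat) :=
  [(1, 2, 3); (1, 3, 2); (2, 1, 3); (2, 3, 1); (3, 1, 2); (3, 2, 1)]%nat.

Lemma perms123_rot i j k : In (i, j, k) perms123 -> In (j, k, i) perms123.
Proof. intros H; case_perms123 H; cbn; tauto. Qed.

Lemma perms123_swap i j k : In (i, j, k) perms123 -> In (j, i, k) perms123.
Proof. intros H; case_perms123 H; cbn; tauto. Qed.

Lemma perms123_labeling i j k : In (i, j, k) perms123 ->
  In i [1; 2; 3]%nat /\ In j [1; 2; 3]%nat /\ In k [1; 2; 3]%nat /\
  i <> j /\ j <> k /\ i <> k.
Proof.
  intros H; case_perms123 H; cbn; repeat split; auto; discriminate.
Qed.

Section Equilibrium.
Variables (phi g : R -> R -> R) (D : nat -> nat -> R) (p : nat -> pt).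
Hypothesis Hpot : potential_assumptions phi g.
Hypothesis Dsym : forall i j, D i j = D j i.
Hypothesis Dpos : forall ij, In ij E -> 0 < D (fst ij) (snd ij).
Hypothesis Hfeas : feasible D.
Hypothesis HQ : in_Q g D p.

Lemma gg_sym i j : gg g D p i j = gg g D p j i.
Proof. unfold gg, e, z, sqnorm; cbn [fst snd]; rewrite Dsym; do 2 f_equal; ring. Qed.

Lemma gg_same_sign i j : 0 < D i j ->
  same_sign (gg g D p i j) (pt_dist (p i) (p j) - D i j).
Proof.
  intros Hd; unfold gg, e; change (z p i j) with (vsub (p i) (p j)).
  rewrite sqnorm_vsub.
  apply (same_sign_trans _ (pt_dist (p i) (p j) ^ 2 - D i j ^ 2)).
  - apply (potential_same_sign phi); [assumption | assumption | nra].
  - apply same_sign_sqr_sub; [apply sqrt_pos | assumption].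
Qed.

Lemma gg_neg_coincident i j : 0 < D i j -> p i = p j -> gg g D p i j < 0.
Proof.
  intros Hd Hij; apply (same_sign_coincident _ (p i) (D i j) Hd).
  rewrite Hij at 2; apply gg_same_sign, Hd.
Qed.

Lemma D_pos_perm i j k : In (i, j, k) perms123 -> 0 < D i j.
Proof.
  intros H; case_perms123 H; rewrite ?(Dsym 2 1), ?(Dsym 3 1), ?(Dsym 3 2);
    first [apply (Dpos (1, 2)%nat) | apply (Dpos (1, 3)%nat) | apply (Dpos (2, 3)%nat)];
    cbn; tauto.
Qed.

Lemma D_triangle_perm i j k : In (i, j, k) perms123 -> D i k < D i j + D j k.
Proof.
  destruct Hfeas as (F1 & F2 & F3).
  intros H; case_perms123 H;
    rewrite ?(Dsym 2 1), ?(Dsym 3 1), ?(Dsym 3 2) in *; lra.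
Qed.

(* Agent 3 also interacts with agent 4, so its triangle equation is derived
   from those of agents 1 and 2 rather than read off [in_Q]. *)
Lemma balanced_perm i j k : In (i, j, k) perms123 ->
  balanced_at (p i) (p j) (p k) (gg g D p i j) (gg g D p i k).
Proof.
  assert (B1 : balanced_at (p 1) (p 2) (p 3) (gg g D p 1 2) (gg g D p 1 3)).
  { pose proof (HQ 1%nat ltac:(cbn; tauto)) as H.
    cbv [nbrs E filter map app fold_right fst snd Nat.eqb] in H.
    unfold balanced_at; rewrite <- H.
    unfold vadd, vscale, vsub, vzero, z; cbn [fst snd]; f_equal; ring. }
  assert (B2 : balanced_at (p 2) (p 1) (p 3) (gg g D p 1 2) (gg g D p 2 3)).
  { pose proof (HQ 2%nat ltac:(cbn; tauto)) as H.
    cbv [nbrs E filter map app fold_right fst snd Nat.eqb] in H.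
    rewrite (gg_sym 2 1) in H.
    unfold balanced_at; rewrite <- H.
    unfold vadd, vscale, vsub, vzero, z; cbn [fst snd]; f_equal; ring. }
  pose proof (balanced_at_third _ _ _ _ _ _ B1 B2) as B3.
  intros H; case_perms123 H;
    rewrite ?(gg_sym 2 1), ?(gg_sym 3 1), ?(gg_sym 3 2);
    first [assumption | apply balanced_at_swap; assumption].
Qed.

Definition config_a (i j k : nat) : Prop :=
  p i <> p j /\ p j <> p k /\ p i <> p k /\ strictly_between (p i) (p j) (p k) /\
  gg g D p i j < 0 /\ gg g D p j k < 0 /\ gg g D p i k > 0 /\
  gg g D p i j + gg g D p i k < 0 /\ gg g D p j k + gg g D p i k < 0.

Definition config_b (i j k : nat) : Prop :=
  p j = p k /\ p j <> p i /\
  gg g D p j k < 0 /\ gg g D p i j = 0 /\ gg g D p i k = 0.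

Definition config_c (i j k : nat) : Prop :=
  p i = p j /\ p j = p k /\
  gg g D p i j < 0 /\ gg g D p j k < 0 /\ gg g D p i k < 0.

Lemma configs_exclusive i j k :
  ~ (config_a i j k /\ config_b i j k) /\ ~ (config_a i j k /\ config_c i j k) /\
  ~ (config_b i j k /\ config_c i j k).
Proof.
  unfold config_a, config_b, config_c.
  repeat split; intros H; decompose [and] H; congruence.
Qed.

Lemma config_a_perm i j k : In (i, j, k) perms123 ->
  p i <> p j -> p j <> p k -> p i <> p k -> strictly_between (p i) (p j) (p k) ->
  config_a i j k.
Proof.
  intros Hijk Hij Hjk Hik Hb.
  pose proof (perms123_rot _ _ _ Hijk) as Hjki.
  pose proof (perms123_swap _ _ _ (perms123_rot _ _ _ Hjki)) as Hikj.
  pose proof (balanced_perm _ _ _ (perms123_swap _ _ _ Hjki)) as Bk.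
  rewrite (gg_sym k j), (gg_sym k i) in Bk.
  unfold config_a; do 4 (split; [assumption|]).
  apply (balanced_between_sign (p i) (p j) (p k) _ _ _ (D i j) (D j k) (D i k)).
  - apply (D_triangle_perm _ _ _ Hijk).
  - apply gg_same_sign, (D_pos_perm _ _ _ Hijk).
  - apply gg_same_sign, (D_pos_perm _ _ _ Hjki).
  - apply gg_same_sign, (D_pos_perm _ _ _ Hikj).
  - apply (balanced_perm _ _ _ Hijk).
  - exact Bk.
  - exact Hik.
  - exact Hb.
Qed.

Lemma config_b_perm i j k : In (i, j, k) perms123 ->
  p j = p k -> p j <> p i -> config_b i j k.
Proof.
  intros Hijk Hjk Hji.
  pose proof (perms123_rot _ _ _ Hijk) as Hjki.
  pose proof (balanced_perm _ _ _ Hjki) as Bj.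
  rewrite (gg_sym j i) in Bj.
  unfold config_b; do 2 (split; [assumption|]); split.
  - apply gg_neg_coincident; [apply (D_pos_perm _ _ _ Hjki) | assumption].
  - apply (balanced_pair_coincide (p i) (p j) (p k) _ (gg g D p j k)); auto.
    apply (balanced_perm _ _ _ Hijk).
Qed.

Lemma config_c_perm i j k : In (i, j, k) perms123 ->
  p i = p j -> p j = p k -> config_c i j k.
Proof.
  intros Hijk Hij Hjk.
  pose proof (perms123_rot _ _ _ Hijk) as Hjki.
  pose proof (perms123_swap _ _ _ (perms123_rot _ _ _ Hjki)) as Hikj.
  unfold config_c; repeat split; try assumption; apply gg_neg_coincident.
  - apply (D_pos_perm _ _ _ Hijk).
  - assumption.
  - apply (D_pos_perm _ _ _ Hjki).
  - assumption.
  - apply (D_pos_perm _ _ _ Hikj).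
  - congruence.
Qed.

Lemma collinear_equilibrium_config :
  collinear (p 1%nat) (p 2%nat) (p 3%nat) ->
  exists i j k, In (i, j, k) perms123 /\
    (config_a i j k \/ config_b i j k \/ config_c i j k).
Proof.
  intros Hcol.
  destruct (classic (p 1%nat = p 2%nat)) as [E12 | N12];
  destruct (classic (p 2%nat = p 3%nat)) as [E23 | N23];
  destruct (classic (p 1%nat = p 3%nat)) as [E13 | N13]; try congruence.
  - exists 1%nat, 2%nat, 3%nat; split; [cbn; tauto|].
    right; right; apply config_c_perm; first [cbn; tauto | congruence].
  - exists 3%nat, 1%nat, 2%nat; split; [cbn; tauto|].
    right; left; apply config_b_perm; first [cbn; tauto | congruence].
  - exists 1%nat, 2%nat, 3%nat; split; [cbn; tauto|].
    right; left; apply config_b_perm; first [cbn; tauto | congruence].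
  - exists 2%nat, 1%nat, 3%nat; split; [cbn; tauto|].
    right; left; apply config_b_perm; first [cbn; tauto | congruence].
  - destruct (collinear_strictly_between _ _ _ N12 N23 N13 Hcol) as [B | [B | B]].
    + exists 1%nat, 3%nat, 2%nat; split; [cbn; tauto|].
      left; apply config_a_perm; first [cbn; tauto | congruence].
    + exists 1%nat, 2%nat, 3%nat; split; [cbn; tauto|].
      left; apply config_a_perm; first [cbn; tauto | congruence].
    + exists 2%nat, 1%nat, 3%nat; split; [cbn; tauto|].
      left; apply config_a_perm; first [cbn; tauto | congruence].
Qed.

End Equilibrium.

Theorem lemma2 (phi g : R -> R -> R) (D : nat -> nat -> R) (p : nat -> pt)
  (Hpot : potential_assumptions phi g)
  (Dsym : forall i j, D i j = D j i)
  (Dpos : forall ij, In ij E -> 0 < D (fst ij) (snd ij))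
  (Hfeas : feasible D)
  (HQI : in_QI g D p)
  (Hcol : collinear (p 1%nat) (p 2%nat) (p 3%nat)) :
  exists i j k : nat,
    In i [1; 2; 3]%nat /\ In j [1; 2; 3]%nat /\ In k [1; 2; 3]%nat /\
    i <> j /\ j <> k /\ i <> k /\
    let Ca :=
      (p i <> p j /\ p j <> p k /\ p i <> p k /\ strictly_between (p i) (p j) (p k) /\
       gg g D p i j < 0 /\ gg g D p j k < 0 /\ gg g D p i k > 0 /\
       gg g D p i j + gg g D p i k < 0 /\ gg g D p j k + gg g D p i k < 0) in
    let Cb :=
      (p j = p k /\ p j <> p i /\
       gg g D p j k < 0 /\ gg g D p i j = 0 /\ gg g D p i k = 0) in
    let Cc :=
      (p i = p j /\ p j = p k /\
       gg g D p i j < 0 /\ gg g D p j k < 0 /\ gg g D p i k < 0) in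
    (Ca \/ Cb \/ Cc) /\ ~ (Ca /\ Cb) /\ ~ (Ca /\ Cc) /\ ~ (Cb /\ Cc).
Proof.
  destruct HQI as [HQ _].
  destruct (collinear_equilibrium_config phi g D p Hpot Dsym Dpos Hfeas HQ Hcol)
    as (i & j & k & Hijk & Hconfig).
  exists i, j, k.
  destruct (perms123_labeling _ _ _ Hijk) as (Hi & Hj & Hk & Hij & Hjk & Hik).
  do 6 (split; [assumption|]).
  exact (conj Hconfig (configs_exclusive g D p i j k)).
Qed.
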